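(* Let $\{(X_s,\|\cdot\|_s)\}_{s\in\mathbb N_0}$ be a sequence of reflexive Banach spaces such that $\{0\}\neq\bigcap_{s}X_s\subseteq\cdots\subseteq X_2\subseteq X_1\subseteq X_0$, $\|\cdot\|_0\le\|\cdot\|_1\le\|\cdot\|_2\le\cdots$, and $X_F:=\bigcap_s X_s$ is dense in $X_s$ for every $s$. Let $\{g_i\}_{i=1}^\infty\in(X_0^* )^{\mathbb N}$ with $g_i\ne0$ for all $i$. For $s\in\mathbb N_0$ and a scalar sequence $c=\{c_i\}$ put $M^c_s:=\{f\in X_s: |c_i|\le|g_i(f)|\ \forall i\}$, and define $$\Theta_s:=\{c: M^c_s\neq\varnothing\},\qquad \|c\|_s:=\inf\{\|f\|_s: f\in M^c_s\}.$$ Consider for $s\in\mathbb N_0$: $(\mathcal A_1^s)$: for all $c,d\in\Theta_s$, $f\in M^c_s$, $h\in M^d_s$ there is $r\in M^{c+d}_s$ with $\|r\|_s\le\|f\|_s+\|h\|_s$; $(\mathcal A_2^s)$: for every $c\in\Theta_s$ and $\varepsilon>0$ there exist $k\in\mathbb N$ and $f\in M^{c^{(k)}}_s$ with $\|f\|_s<\varepsilon$, where $c^{(k)}=\{0,\dots,0,c_{k+1},c_{k+2},\dots\}$; $(\mathcal A_3^s)$: there is $A_s\in(0,1]$ such that for every $f\in X_s$ and every $\widetilde f\in M_s^{\{g_i(f)\}_{i=1}^\infty}$, $A_s\|f\|_s\le\|\widetilde f\|_s$. Assume $(\mathcal A_1^s)$ holds for every $s\in\mathbb N_0$. Then: $(\mathcal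 P_1)$ $\{\Theta_s\}_{s\in\mathbb N_0}$ is a sequence of solid $BK$-spaces with $\bigcap_s\Theta_s\neq\{0\}$, $\cdots\subseteq\Theta_2\subseteq\Theta_1\subseteq\Theta_0$ and $\|\cdot\|_0\le\|\cdot\|_1\le\cdots$ on these spaces, such that $\{g_i|_{X_s}\}$ is a $\Theta_s$-Bessel sequence for $X_s$ with bound $1$ for every $s\in\mathbb N_0$; $(\mathcal P_2)$ for every $s\in\mathbb N$, $\{g_i|_{X_s}\}$ is a $\Theta_s$-frame for $X_s$ if and only if $(\mathcal A_3^s)$ holds, and if $(\mathcal A_3^s)$ holds with $A_s=1$ then $\{g_i|_{X_s}\}$ is a tight $\Theta_s$-frame for $X_s$; $(\mathcal P_3)$ for every $s\in\mathbb N$, $\Theta_s$ is a $CB$-space if and only if $(\mathcal A_2^s)$ holds.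
   Context: A Banach sequence space $\Theta$ is solid if $\{c_i\}\in\Theta$ and $|d_i|\le|c_i|$ for all $i$ imply $\{d_i\}\in\Theta$ with $\|\{d_i\}\|_\Theta\le\|\{c_i\}\|_\Theta$; a $BK$-space if coordinate functionals are continuous; a $CB$-space if it is a $BK$-space whose canonical unit vectors form a Schauder basis. For a Banach space $Y$ and a Banach sequence space $\Theta$, $\{g_i\}\subset Y^*$ is a $\Theta$-Bessel sequence for $Y$ with bound $B$ if $\{g_i(f)\}\in\Theta$ and $\|\{g_i(f)\}\|_\Theta\le B\|f\|$ for all $f\in Y$; a $\Theta$-frame if additionally $A\|f\|\le\|\{g_i(f)\}\|_\Theta$ for some $A>0$ and all $f$; tight if one can take $A=B$. *)

From HB Require Import structures.
From mathcomp Require Import all_boot all_order all_algebra.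
From mathcomp Require Import all_classical all_reals all_analysis.
Set Implicit Arguments. Unset Strict Implicit. Unset Printing Implicit Defensive.
Import Order.TTheory GRing.Theory Num.Theory.
Local Open Scope classical_set_scope.
Local Open Scope ring_scope.

Section Defs.
Variable R : realType.

(* ---------- generic notions for a "space" = subset S of a vector space
   with a function N : T -> R intended as a norm on S ---------- *)

Definition subspace_on (V : lmodType R) (S : set V) : Prop :=
  S 0 /\ (forall x y, S x -> S y -> S (x + y)) /\
  (forall (a : R) x, S x -> S (a *: x)).

Definition norm_on (V : lmodType R) (S : set V) (N : V -> R) : Prop :=
  (forall x, S x -> 0 <= N x) /\
  (forall x, S x -> N x = 0 -> x = 0) /\
  (forall (a : R) x, S x -> N (a *: x) = `|a| * N x) /\
  (forall x y, S x -> S y -> N (x + y) <= N x + N y).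

Definition complete_on (V : zmodType) (S : set V) (N : V -> R) : Prop :=
  forall u : nat -> V, (forall n, S (u n)) ->
  (forall e : R, 0 < e -> exists M, forall m n, (M <= m)%N -> (M <= n)%N ->
       N (u m - u n) < e) ->
  exists x, S x /\
    (forall e : R, 0 < e -> exists M, forall n, (M <= n)%N -> N (u n - x) < e).

Definition banach_on (V : lmodType R) (S : set V) (N : V -> R) : Prop :=
  subspace_on S /\ norm_on S N /\ complete_on S N.

Definition continuous_on (V : zmodType) (S : set V) (N : V -> R) (phi : V -> R)
  : Prop :=
  forall x, S x -> forall e : R, 0 < e -> exists2 d : R, 0 < d &
    forall y, S y -> N (y - x) < d -> `|phi y - phi x| < e.

Definition linear_on (V : lmodType R) (S : set V) (phi : V -> R) : Prop :=
  forall (a : R) x y, S x -> S y -> phi (a *: x + y) = a * phi x + phi y.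

Definition dual_on (V : lmodType R) (S : set V) (N : V -> R) : set (V -> R) :=
  [set g | linear_on S g /\ continuous_on S N g].

Definition opnorm (V : lmodType R) (S : set V) (N : V -> R) (g : V -> R) : R :=
  sup [set `|g x| | x in [set x | S x /\ N x <= 1]].

Definition reflexive_on (V : lmodType R) (S : set V) (N : V -> R) : Prop :=
  forall Phi : (V -> R) -> R,
    linear_on (dual_on S N) Phi ->
    continuous_on (dual_on S N) (opnorm S N) Phi ->
    exists2 x, S x & forall g, dual_on S N g -> Phi g = g x.

Definition dense_in (V : zmodType) (D S : set V) (N : V -> R) : Prop :=
  forall x, S x -> forall e : R, 0 < e -> exists2 y, D y & N (x - y) < e.

Definition seq_space (Th : set (nat -> R)) (nrm : (nat -> R) -> R) : Prop :=
  banach_on Th nrm.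

Definition solid (Th : set (nat -> R)) (nrm : (nat -> R) -> R) : Prop :=
  forall c d : nat -> R, Th c -> (forall i, `|d i| <= `|c i|) ->
    Th d /\ nrm d <= nrm c.

Definition BK_space (Th : set (nat -> R)) (nrm : (nat -> R) -> R) : Prop :=
  seq_space Th nrm /\ forall i : nat, continuous_on Th nrm (fun c => c i).

Definition unit_vec (j : nat) : nat -> R := fun i => if i == j then 1 else 0.

Definition schauder_basis (Th : set (nat -> R)) (nrm : (nat -> R) -> R)
  (b : nat -> nat -> R) : Prop :=
  (forall j, Th (b j)) /\
  forall c, Th c -> exists! a : nat -> R,
    nrm (c - \sum_(j < n) a j *: b j) @[n --> \oo] --> (0 : R^o).

Definition CB_space (Th : set (nat -> R)) (nrm : (nat -> R) -> R) : Prop :=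
  BK_space Th nrm /\ schauder_basis Th nrm unit_vec.

Definition coef_seq (V : Type) (g : nat -> V -> R) (f : V) : nat -> R :=
  fun i => g i f.

Definition bessel_with (V : Type) (X : set V) (N : V -> R) (g : nat -> V -> R)
  (Th : set (nat -> R)) (nrm : (nat -> R) -> R) (B : R) : Prop :=
  forall f, X f -> Th (coef_seq g f) /\ nrm (coef_seq g f) <= B * N f.

Definition bessel (V : Type) (X : set V) (N : V -> R) (g : nat -> V -> R)
  (Th : set (nat -> R)) (nrm : (nat -> R) -> R) : Prop :=
  exists B : R, bessel_with X N g Th nrm B.

Definition frame_with (V : Type) (X : set V) (N : V -> R) (g : nat -> V -> R)
  (Th : set (nat -> R)) (nrm : (nat -> R) -> R) (A B : R) : Prop :=
  0 < A /\ bessel_with X N g Th nrm B /\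
  forall f, X f -> A * N f <= nrm (coef_seq g f).

Definition frame (V : Type) (X : set V) (N : V -> R) (g : nat -> V -> R)
  (Th : set (nat -> R)) (nrm : (nat -> R) -> R) : Prop :=
  exists A B : R, frame_with X N g Th nrm A B.

Definition tight_frame (V : Type) (X : set V) (N : V -> R) (g : nat -> V -> R)
  (Th : set (nat -> R)) (nrm : (nat -> R) -> R) : Prop :=
  exists A : R, frame_with X N g Th nrm A A.

Definition Mset (V : Type) (X : set V) (g : nat -> V -> R) (c : nat -> R) : set V :=
  [set f | X f /\ forall i, `|c i| <= `|g i f|].

Definition Theta (V : Type) (X : set V) (g : nat -> V -> R) : set (nat -> R) :=
  [set c | Mset X g c !=set0].

Definition Theta_norm (V : Type) (X : set V) (N : V -> R) (g : nat -> V -> R)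
  (c : nat -> R) : R :=
  inf [set N f | f in Mset X g c].

Definition tail_seq (c : nat -> R) (k : nat) : nat -> R :=
  fun i => if (i < k)%N then 0 else c i.

Definition A1 (V : Type) (X : set V) (N : V -> R) (g : nat -> V -> R) : Prop :=
  forall c d : nat -> R, Theta X g c -> Theta X g d ->
  forall f h, Mset X g c f -> Mset X g d h ->
  exists2 r, Mset X g (fun i => c i + d i) r & N r <= N f + N h.

Definition A2 (V : Type) (X : set V) (N : V -> R) (g : nat -> V -> R) : Prop :=
  forall c, Theta X g c -> forall e : R, 0 < e ->
  exists k : nat, (0 < k)%N /\ exists2 f, Mset X g (tail_seq c k) f & N f < e.

Definition A3_with (V : Type) (X : set V) (N : V -> R) (g : nat -> V -> R)
  (A : R) : Prop :=
  forall f, X f -> forall ft, Mset X g (coef_seq g f) ft -> A * N f <= N ft.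

Definition A3 (V : Type) (X : set V) (N : V -> R) (g : nat -> V -> R) : Prop :=
  exists A : R, 0 < A /\ A <= 1 /\ A3_with X N g A.

End Defs.

(* The norm of Theta_s is an infimum over M^c_s, and every property of Theta_s
   is read off from it. (A1) gives the triangle inequality, and coordinates are
   bounded since |c_i| <= |g_i(f)| <= ||g_i|| ||f|| for f in M^c_s; so Theta_s
   is a solid normed BK-space once it is complete. For a Cauchy sequence u, let
   c be its coordinatewise limit along an ultrafilter refining the cofinite
   filter. Near-minimisers for u_m - u_n are bounded, so by reflexivity they
   have a weak limit along the ultrafilter; it lies in M^(u_m - c), and a
   Hahn-Banach norming functional bounds its norm, whence u_m -> c.
   Since f is in M^{g(f)}, the coefficient map has Bessel bound 1, and a lower
   frame bound is exactly (A3). Finally c minus the n-th partial sum of c is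
   the tail c^(n), whose norm decreases in n by solidity: the unit vectors form
   a basis iff (A2) holds. *)

From HB Require Import structures.
From mathcomp Require Import all_boot all_order all_algebra.
From mathcomp Require Import all_classical all_reals all_analysis.
From mathcomp Require Import ring lra.
Import Order.TTheory GRing.Theory Num.Theory numFieldNormedType.Exports.
Local Open Scope classical_set_scope.
Local Open Scope ring_scope.
Set Implicit Arguments.
Unset Strict Implicit.
Unset Printing Implicit Defensive.

Section SubspaceOn.
Variables (R : realType) (V : lmodType R) (S : set V).
Hypothesis sS : subspace_on S.

Lemma subspace_on0 : S 0. Proof. exact: sS.1. Qed.

Lemma subspace_onD x y : S x -> S y -> S (x + y). Proof. exact: sS.2.1. Qed.

Lemma subspace_onZ a x : S x -> S (a *: x). Proof. exact: sS.2.2. Qed.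

Lemma subspace_onN x : S x -> S (- x).
Proof. by rewrite -scaleN1r; apply: subspace_onZ. Qed.

Lemma subspace_onB x y : S x -> S y -> S (x - y).
Proof. by move=> Sx Sy; apply: subspace_onD => //; apply: subspace_onN. Qed.

Variable phi : V -> R.
Hypothesis lin : linear_on S phi.

Lemma linear_on0 : phi 0 = 0.
Proof.
have := lin 1 subspace_on0 subspace_on0.
rewrite scale1r addr0 mul1r => E.
by apply: (@addrI _ (phi 0)); rewrite addr0 -E.
Qed.

Lemma linear_onZ a x : S x -> phi (a *: x) = a * phi x.
Proof.
by move=> Sx; have := lin a Sx subspace_on0; rewrite !addr0 linear_on0 addr0.
Qed.

Lemma linear_onD x y : S x -> S y -> phi (x + y) = phi x + phi y.
Proof. by move=> Sx Sy; have := lin 1 Sx Sy; rewrite scale1r mul1r. Qed.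

Lemma linear_onB x y : S x -> S y -> phi (x - y) = phi x - phi y.
Proof.
move=> Sx Sy; rewrite (linear_onD Sx (subspace_onN Sy)) -[- y]scaleN1r.
by rewrite linear_onZ // mulN1r.
Qed.

End SubspaceOn.

Section NormOn.
Variables (R : realType) (V : lmodType R) (S : set V) (N : V -> R).
Hypotheses (sS : subspace_on S) (nN : norm_on S N).

Lemma norm_on_ge0 x : S x -> 0 <= N x. Proof. exact: nN.1. Qed.

Lemma norm_on_eq0 x : S x -> N x = 0 -> x = 0. Proof. exact: nN.2.1. Qed.

Lemma norm_onZ a x : S x -> N (a *: x) = `|a| * N x.
Proof. exact: nN.2.2.1. Qed.

Lemma norm_onD x y : S x -> S y -> N (x + y) <= N x + N y.
Proof. exact: nN.2.2.2. Qed.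

Lemma norm_on0 : N 0 = 0.
Proof.
by rewrite -(scale0r 0) norm_onZ ?normr0 ?mul0r //; apply: subspace_on0.
Qed.

Lemma norm_onN x : S x -> N (- x) = N x.
Proof. by move=> Sx; rewrite -scaleN1r norm_onZ // normrN normr1 mul1r. Qed.

Lemma norm_on_distC x y : S x -> S y -> N (x - y) = N (y - x).
Proof. by move=> Sx Sy; rewrite -opprB norm_onN //; apply: subspace_onB. Qed.

End NormOn.

Section HahnBanach.
Variables (R : realType) (V : lmodType R) (X : set V) (p : V -> R).
Hypothesis sX : subspace_on X.
Hypothesis pZ : forall (a : R) x, X x -> p (a *: x) = `|a| * p x.
Hypothesis pD : forall x y, X x -> X y -> p (x + y) <= p x + p y.

Lemma seminorm0 : p 0 = 0.
Proof. by rewrite -(scale0r 0) pZ ?normr0 ?mul0r //; apply: subspace_on0. Qed.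

Lemma seminorm_ge0 x : X x -> 0 <= p x.
Proof.
move=> Xx; have := pD Xx (subspace_onN sX Xx).
by rewrite subrr seminorm0 -scaleN1r pZ // normrN normr1 mul1r; lra.
Qed.

Lemma seminormZ_pos (b : R) x : 0 < b -> X x -> p (b *: x) = b * p x.
Proof. by move=> b0 Xx; rewrite pZ // gtr0_norm. Qed.

(* The graph of a linear functional on a subspace of [X], dominated by [p]. *)
Definition dominated_graph (G : set (V * R)) :=
  [/\ subspace_on G, forall t, G (0, t) -> t = 0
    & forall v t, G (v, t) -> X v /\ t <= p v].

Lemma graph_functional G v t t' : dominated_graph G -> G (v, t) -> G (v, t') ->
  t = t'.
Proof.
move=> [sG G0 _] Gt Gt'; apply/eqP; rewrite -subr_eq0; apply/eqP/G0.
by rewrite -(subrr v); apply: (subspace_onB sG Gt Gt').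
Qed.

Definition line_ext (G : set (V * R)) (z : V * R) : set (V * R) :=
  [set w | exists2 u, G u & exists a : R, w = u + a *: z].

Lemma line_ext_sub G z : subspace_on G -> G `<=` line_ext G z.
Proof. by move=> sG u Gu; exists u => //; exists 0; rewrite scale0r addr0. Qed.

Lemma line_ext_point G z : subspace_on G -> line_ext G z z.
Proof.
by move=> sG; exists 0; [apply: subspace_on0|exists 1; rewrite scale1r add0r].
Qed.

Lemma subspace_line_ext G z : subspace_on G -> subspace_on (line_ext G z).
Proof.
move=> sG; split; first by apply: line_ext_sub => //; apply: subspace_on0.
split=> [_ _ [u Gu [a ->]] [w Gw [b ->]]|c _ [u Gu [a ->]]].
  exists (u + w); first exact: subspace_onD.
  by exists (a + b); rewrite scalerDl addrACA.
exists (c *: u); first exact: subspace_onZ.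
by exists (c * a); rewrite scalerDr scalerA.
Qed.

(* The admissible values at [y] of a dominated extension of [G]. *)
Definition line_bound (G : set (V * R)) (y : V) (alpha : R) :=
  forall v t, G (v, t) -> t - p (v - y) <= alpha /\ alpha <= p (v + y) - t.

Lemma line_bound_exists G y : dominated_graph G -> X y ->
  exists alpha, line_bound G y alpha.
Proof.
move=> [sG _ Gp] Xy.
have sep v t w s : G (v, t) -> G (w, s) -> t - p (v - y) <= p (w + y) - s.
  move=> Gvt Gws; have [Xv _] := Gp _ _ Gvt; have [Xw _] := Gp _ _ Gws.
  have [_ ts] : X (v + w) /\ t + s <= p (v + w).
    exact: Gp _ _ (subspace_onD sG Gvt Gws).
  have := pD (subspace_onB sX Xv Xy) (subspace_onD sX Xw Xy).
  by rewrite addrACA addNr addr0 /=; lra.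
pose L := [set r | exists v t, G (v, t) /\ r = t - p (v - y)].
have G0 : G (0, 0) := subspace_on0 sG.
have L0 : L !=set0 by exists (0 - p (0 - y)), 0, 0.
have Lub : ubound L (p (0 + y) - 0) by move=> _ [v [t [Gvt ->]]]; apply: sep.
exists (sup L) => v t Gvt; split.
  by apply: ub_le_sup; [exists (p (0 + y) - 0)|exists v, t].
by apply: ge_sup => // _ [w [s [Gws ->]]]; apply: sep.
Qed.

Lemma dominated_line_ext G y alpha : dominated_graph G -> X y ->
  ~ (exists t, G (y, t)) -> line_bound G y alpha ->
  dominated_graph (line_ext G (y, alpha)).
Proof.
move=> [sG G0 Gp] Xy Gy bnd.
have Gscale b v t : G (v, t) -> G (b *: v, b * t).
  exact: (subspace_onZ sG b).
split; first exact: subspace_line_ext.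
  move=> t [[v s] Gvs [a [v0 ->]]].
  have a0 : a = 0.
    apply: contra_notP Gy => /eqP a0; exists (- a^-1 * s).
    have ay : a *: y = - v by apply/eqP; rewrite -addr_eq0 addrC -v0.
    have -> : y = - a^-1 *: v.
      by rewrite scaleNr -scalerN -ay scalerA mulVf // scale1r.
    exact: Gscale.
  by move: v0 Gvs; rewrite a0 !scale0r !addr0 => <- /G0.
move=> _ _ [[v s] Gvs [a [-> ->]]]; have [Xv sv] := Gp _ _ Gvs.
change (X (v + a *: y) /\ s + a * alpha <= p (v + a *: y)).
split; first exact: (subspace_onD sX Xv (subspace_onZ sX a Xy)).
have [a0|a0|->] := ltgtP a 0; last by rewrite scale0r mul0r !addr0.
- have b0 : 0 < - a by rewrite oppr_gt0.
  have [lo _] := bnd _ _ (Gscale (- a)^-1 _ _ Gvs).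
  have := ler_wpM2l (ltW b0) lo.
  rewrite mulrBr mulrA mulfV ?gt_eqF // mul1r -seminormZ_pos //; last first.
    exact: (subspace_onB sX (subspace_onZ sX _ Xv) Xy).
  rewrite scalerBr scalerA mulfV ?gt_eqF // scale1r scaleNr opprK; lra.
- have [_ hi] := bnd _ _ (Gscale a^-1 _ _ Gvs).
  have := ler_wpM2l (ltW a0) hi.
  rewrite mulrBr mulrA mulfV ?gt_eqF // mul1r -seminormZ_pos //; last first.
    exact: (subspace_onD sX (subspace_onZ sX _ Xv) Xy).
  rewrite scalerDr scalerA mulfV ?gt_eqF // scale1r; lra.
Qed.

Variable x0 : V.
Hypothesis Xx0 : X x0.

Definition norming_graph G := dominated_graph G /\ G (x0, p x0).

Lemma norming_graph_line : norming_graph (line_ext [set 0] (x0, p x0)).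
Proof.
have s0 : subspace_on [set 0 : V * R].
  by split=> //; split=> [_ _ -> ->|a _ ->]; rewrite ?addr0 ?scaler0.
split; last exact: line_ext_point.
split; first exact: subspace_line_ext.
  move=> t [_ -> [a [ax0 ->]]]; change (0 + a * p x0 = 0); rewrite add0r.
  have [->|a0] := eqVneq a 0; first by rewrite mul0r.
  move/esym/eqP: ax0; rewrite add0r scaler_eq0 (negbTE a0) => /eqP ->.
  by rewrite seminorm0 mulr0.
move=> _ _ [_ -> [a [-> ->]]]; rewrite !add0r.
split; first exact: subspace_onZ.
by rewrite pZ // ler_wpM2r ?seminorm_ge0 ?ler_norm.
Qed.

Lemma norming_graph_union (A : set (set (V * R))) : A !=set0 ->
  (forall G, A G -> norming_graph G) ->
  (forall G H, A G -> A H -> G `<=` H \/ H `<=` G) ->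
  norming_graph (\bigcup_(G in A) G).
Proof.
move=> [G0 AG0] An Atot.
have common u w : (\bigcup_(G in A) G) u -> (\bigcup_(G in A) G) w ->
    exists2 G, A G & G u /\ G w.
  move=> [G AG Gu] [H AH Hw].
  have [GH|HG] := Atot _ _ AG AH.
    by exists H => //; split=> //; apply: GH.
  by exists G => //; split=> //; apply: HG.
have [[sG0 _ _] Gx0] := An _ AG0.
split; last by exists G0.
split.
- split; first by exists G0 => //; apply: subspace_on0 sG0.
  split=> [u w Uu Uw|a u [G AG Gu]].
    have [G AG [Gu Gw]] := common _ _ Uu Uw; have [[sG _ _] _] := An _ AG.
    by exists G => //; apply: (subspace_onD sG Gu Gw).
  have [[sG _ _] _] := An _ AG.
  by exists G => //; apply: (subspace_onZ sG a Gu).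
- by move=> t [G AG Gt]; have [[_ G0t _] _] := An _ AG; apply: G0t.
- by move=> v t [G AG Gt]; have [[_ _ Gp] _] := An _ AG; apply: Gp.
Qed.

Lemma norming_graph_maximal : exists2 G, norming_graph G &
  forall H, norming_graph H -> G `<=` H -> H `<=` G.
Proof.
pose T := {G | norming_graph G}.
pose le (G H : T) := `[< sval G `<=` sval H >].
have [||| [G nG] Gmax] := @ZL_preorder T (exist _ _ norming_graph_line) le.
- by move=> G; apply/asboolP.
- move=> G H K /asboolP GH /asboolP HK.
  by apply/asboolP; apply: subset_trans HK.
- move=> A Atot; have [[G AG]|A0] := pselect (A !=set0); last first.
    by exists (exist _ _ norming_graph_line) => G AG; case: A0; exists G.
  pose U := \bigcup_(H in sval @` A) H.
  have nU : norming_graph U.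
    apply: norming_graph_union; first by exists (sval G), G.
      by move=> _ [H _ <-]; apply: (svalP H).
    move=> _ _ [H AH <-] [K AK <-].
    by case: (Atot _ _ AH AK) => /asboolP; [left|right].
  by exists (exist _ _ nU) => H AH; apply/asboolP => u Hu; exists (sval H).
- exists G => // H nH GH; apply/asboolP; apply: (Gmax (exist _ H nH)).
  exact/asboolP.
Qed.

Lemma hahn_banach : exists h : V -> R,
  [/\ linear_on X h, forall x, X x -> h x <= p x & h x0 = p x0].
Proof.
have [G [dG Gx0] Gmax] := norming_graph_maximal.
have [sG _ Gp] := dG.
have Gtotal y : X y -> exists t, G (y, t).
  move=> Xy; apply: contrapT => Gy.
  have [alpha bnd] := line_bound_exists dG Xy.
  have dL := dominated_line_ext dG Xy Gy bnd.
  have nL : norming_graph (line_ext G (y, alpha)).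
    by split=> //; apply: line_ext_sub.
  have := Gmax _ nL (line_ext_sub _ sG) _ (line_ext_point _ sG).
  by move=> Gya; apply: Gy; exists alpha.
pose h y := xget 0 [set t | G (y, t)].
have Gh y : X y -> G (y, h y).
  by move=> /Gtotal [t Gt]; apply: (@xgetPex _ 0 [set t | G (y, t)]); exists t.
exists h; split.
- move=> a x y Xx Xy; apply: graph_functional dG (Gh _ _) _.
    exact: (subspace_onD sX (subspace_onZ sX a Xx) Xy).
  exact: (subspace_onD sG (subspace_onZ sG a (Gh _ Xx)) (Gh _ Xy)).
- by move=> x /Gh /Gp [].
- exact: graph_functional dG (Gh _ Xx0) Gx0.
Qed.

End HahnBanach.

Section UltraLimits.
Variables (T : Type) (U : set_system T).
Hypothesis UU : UltraFilter U.

Lemma ultra_fmap (W : Type) (f : T -> W) : UltraFilter (f @ U).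
Proof.
split=> [|G PG UG]; first exact: fmap_proper_filter.
rewrite eqEsubset; split=> // A GA.
have [//|UnA] := in_ultra_setVsetC (f @^-1` A) UU.
have /filter_ex [w [Aw nAw]] : G (A `&` ~` A).
  by apply: filterI => //; apply: UG; exact: UnA.
by case: (nAw Aw).
Qed.

Lemma ultra_bounded_cvg (R : realType) (x : T -> R) (B : R) :
  (\forall t \near U, `|x t| <= B) -> cvg (x @ U).
Proof.
move=> xB.
have : compact `[- B, B] := @segment_compact R (- B) B.
rewrite compact_ultra => /(_ _ (ultra_fmap x)) [|l [_ xl]]; last exact: cvgP xl.
by apply: filterS xB => t /=; rewrite in_itv /= -ler_norml.
Qed.

End UltraLimits.

Lemma bounded_continuous_on (R : realType) (V : lmodType R) (S : set V)
    (N : V -> R) (h : V -> R) (K : R) :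
  subspace_on S -> linear_on S h -> 0 <= K ->
  (forall x, S x -> `|h x| <= K * N x) -> continuous_on S N h.
Proof.
move=> sS lin K0 hK x Sx e e0; have K1 : 0 < K + 1 by rewrite ltr_wpDl.
exists (e / (K + 1)) => [|y Sy yx]; first by rewrite divr_gt0.
rewrite -(linear_onB sS lin Sy Sx).
apply: le_lt_trans (hK _ (subspace_onB sS Sy Sx)) _.
apply: le_lt_trans (ler_wpM2l K0 (ltW yx)) _.
by rewrite mulrA ltr_pdivrMr //; nra.
Qed.

Section Dual.
Variables (R : realType) (V : lmodType R) (X : set V) (N : V -> R).
Hypotheses (sX : subspace_on X) (nX : norm_on X N).

Lemma dual_on_bounded h : dual_on X N h ->
  exists2 K, 0 <= K & forall x, X x -> `|h x| <= K * N x.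
Proof.
move=> [lin cont]; have h0 := linear_on0 sX lin.
have [d d0 hd] := cont 0 (subspace_on0 sX) 1 ltr01.
exists (2 / d) => [|x Xx]; first by rewrite divr_ge0 // ltW.
have [Nx0|Nx_neq0] := eqVneq (N x) 0.
  by rewrite (norm_on_eq0 nX Xx Nx0) h0 normr0 (norm_on0 sX nX) mulr0.
have Nx_gt0 : 0 < N x by rewrite lt_neqAle eq_sym Nx_neq0 (norm_on_ge0 nX Xx).
pose c := d / (2 * N x); have c0 : 0 < c by rewrite divr_gt0 // mulr_gt0.
have := hd (c *: x) (subspace_onZ sX c Xx).
rewrite !subr0 h0 subr0 (norm_onZ nX c Xx) (linear_onZ sX lin c Xx).
rewrite (normrM c (h x)) !(gtr0_norm c0).
have -> : c * N x = d / 2 by rewrite /c; field; rewrite Nx_neq0.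
have -> : 2 / d * N x = c^-1 by rewrite /c; field; rewrite Nx_neq0 gt_eqF.
move=> /(_ ltac:(lra)) /ltW hc.
by rewrite -(ler_pM2l c0) mulfV ?gt_eqF.
Qed.

Lemma opnorm_ub h x : dual_on X N h -> X x -> N x <= 1 ->
  `|h x| <= opnorm X N h.
Proof.
move=> hd Xx Nx; have [K K0 hK] := dual_on_bounded hd.
apply: ub_le_sup; last by exists x.
exists K => _ [y [Xy Ny] <-]; apply: le_trans (hK _ Xy) _.
by rewrite -[leRHS]mulr1 ler_wpM2l.
Qed.

Lemma opnorm_ge0 h : dual_on X N h -> 0 <= opnorm X N h.
Proof.
move=> hd; apply: le_trans (normr_ge0 (h 0)) (opnorm_ub hd (subspace_on0 sX) _).
by rewrite (norm_on0 sX nX).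
Qed.

Lemma opnorm_bound h x : dual_on X N h -> X x -> `|h x| <= opnorm X N h * N x.
Proof.
move=> hd Xx; have [lin _] := hd.
have [Nx0|Nx_neq0] := eqVneq (N x) 0.
  by rewrite Nx0 mulr0 (norm_on_eq0 nX Xx Nx0) (linear_on0 sX lin) normr0.
have Nx_gt0 : 0 < N x by rewrite lt_neqAle eq_sym Nx_neq0 (norm_on_ge0 nX Xx).
have := opnorm_ub hd (subspace_onZ sX (N x)^-1 Xx).
rewrite (linear_onZ sX lin _ Xx) (norm_onZ nX _ Xx) normrM normfV.
rewrite (gtr0_norm Nx_gt0) mulVf ?gt_eqF // => /(_ (lexx 1)).
by move=> hb; rewrite -ler_pdivrMr // mulrC.
Qed.

Lemma dual_onZD a h1 h2 : dual_on X N h1 -> dual_on X N h2 ->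
  dual_on X N (a *: h1 + h2).
Proof.
move=> d1 d2; have [K1 K10 hK1] := dual_on_bounded d1.
have [K2 K20 hK2] := dual_on_bounded d2.
have lin : linear_on X (a *: h1 + h2).
  move=> b x y Xx Xy; change (a * h1 (b *: x + y) + h2 (b *: x + y) =
    b * (a * h1 x + h2 x) + (a * h1 y + h2 y)).
  by rewrite (d1.1 b x y) // (d2.1 b x y) //; ring.
split=> //; apply: (@bounded_continuous_on _ _ _ _ _ (`|a| * K1 + K2)) => //.
  by rewrite addr_ge0 ?mulr_ge0.
move=> x Xx; apply: le_trans (ler_normD (a * h1 x) (h2 x)) _.
rewrite normrM mulrDl -mulrA.
exact: lerD (ler_wpM2l (normr_ge0 a) (hK1 _ Xx)) (hK2 _ Xx).
Qed.

Lemma subspace_dual_on : subspace_on (dual_on X N).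
Proof.
have lin0 : linear_on X (0 : V -> R).
  by move=> a x y _ _ /=; rewrite mulr0 addr0.
have d0 : dual_on X N 0.
  split=> //; apply: (@bounded_continuous_on _ _ _ _ _ 0) => // x _ /=.
  by rewrite normr0 mul0r.
split=> //; split=> [h1 h2 d1 d2|a h d].
  by rewrite -[h1]scale1r; apply: dual_onZD.
by rewrite -[a *: h]addr0; apply: dual_onZD.
Qed.

End Dual.

Section WeakLimit.
Variables (R : realType) (V : lmodType R) (X : set V) (N : V -> R).
Hypothesis BX : banach_on X N.
Let sX : subspace_on X := BX.1.
Let nX : norm_on X N := BX.2.1.

Lemma norming_functional x : X x ->
  exists2 h, dual_on X N h & h x = N x /\ forall y, X y -> h y <= N y.
Proof.
move=> Xx.
have [h [lin hN hx]] := hahn_banach sX (norm_onZ nX) (norm_onD nX) Xx.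
exists h => //; split=> //.
apply: (@bounded_continuous_on _ _ _ _ _ 1) => // y Xy.
have := hN _ (subspace_onN sX Xy).
rewrite (norm_onN nX Xy) -scaleN1r (linear_onZ sX lin _ Xy) mul1r ler_norml.
by have := hN _ Xy; lra.
Qed.

Hypothesis RX : reflexive_on X N.

Lemma reflexive_weak_limit (T : Type) (U : set_system T) (r : T -> V) (B : R) :
  UltraFilter U -> (forall t, X (r t)) -> (forall t, N (r t) <= B) ->
  exists2 x, X x /\ N x <= B & forall h, dual_on X N h -> h \o r @ U --> h x.
Proof.
move=> UU Xr rB; have [t0 _] := filter_ex (@filterT _ U _).
have B0 : 0 <= B := le_trans (norm_on_ge0 nX (Xr t0)) (rB t0).
have rbound h : dual_on X N h ->
    \forall t \near U, `|h (r t)| <= opnorm X N h * B.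
  move=> hd; apply: nearW => t.
  apply: le_trans (opnorm_bound sX nX hd (Xr t)) _.
  exact: (ler_wpM2l (opnorm_ge0 sX nX hd) (rB t)).
pose Phi (h : V -> R) : R := lim (h \o r @ U).
have PhiP h : dual_on X N h -> h \o r @ U --> Phi h.
  by move=> hd; apply: ultra_bounded_cvg (rbound h hd).
have Phi_lin : linear_on (dual_on X N) Phi.
  move=> a h1 h2 d1 d2; apply: cvg_lim; first exact: Rhausdorff.
  exact: cvgD (cvgM (cvg_cst a) (PhiP h1 d1)) (PhiP h2 d2).
have Phi_bound h : dual_on X N h -> `|Phi h| <= B * opnorm X N h.
  move=> hd; rewrite mulrC -(cvg_lim (@Rhausdorff R) (cvg_norm (PhiP h hd))).
  by apply: limr_le; [exact: cvgP (cvg_norm (PhiP h hd))|exact: rbound].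
have [x Xx PhiE] := RX Phi_lin
  (bounded_continuous_on (subspace_dual_on sX nX) Phi_lin B0 Phi_bound).
exists x; last by move=> h hd; rewrite -PhiE //; apply: PhiP.
split=> //; have [h hd [<- hN]] := norming_functional Xx.
rewrite -PhiE //; apply: limr_le; first exact: cvgP (PhiP h hd).
by apply: nearW => t; apply: le_trans (hN _ (Xr t)) (rB t).
Qed.

End WeakLimit.

Section ThetaSpace.
Variables (R : realType) (V : lmodType R) (X : set V) (N : V -> R)
  (g : nat -> V -> R).
Hypothesis BX : banach_on X N.
Let sX : subspace_on X := BX.1.
Let nX : norm_on X N := BX.2.1.

Local Notation M := (Mset X g).
Local Notation Th := (Theta X g).
Local Notation nr := (Theta_norm X N g).

Lemma Mset_solid c d f : (forall i, `|d i| <= `|c i|) -> M c f -> M d f.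
Proof. by move=> dc [Xf cf]; split=> // i; apply: le_trans (cf i). Qed.

Lemma Theta_norm_le c f : M c f -> nr c <= N f.
Proof.
move=> Mf; apply: ge_inf; last by exists f.
by exists 0 => _ [h [Xh _] <-]; exact: (norm_on_ge0 nX Xh).
Qed.

Lemma Theta_norm_ge c b : Th c -> (forall f, M c f -> b <= N f) -> b <= nr c.
Proof.
move=> [f Mf] bN; apply: lb_le_inf; first by exists (N f), f.
by move=> _ [h Mh <-]; apply: bN.
Qed.

Lemma Theta_norm_ge0 c : Th c -> 0 <= nr c.
Proof.
by move=> Tc; apply: Theta_norm_ge => // f [Xf _]; exact: (norm_on_ge0 nX Xf).
Qed.

Lemma Theta_norm_lt c b : Th c -> nr c < b -> exists2 f, M c f & N f < b.
Proof.
move=> [f Mf] /inf_lt [|_ [h Mh <-] hb]; last by exists h.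
by exists (N f), f.
Qed.

Lemma solid_Theta : solid Th nr.
Proof.
move=> c d [f Mf] dc; split; first by exists f; apply: Mset_solid Mf.
by apply: Theta_norm_ge; [exists f|move=> h /(Mset_solid dc)/Theta_norm_le].
Qed.

Lemma bessel_Theta : bessel_with X N g Th nr 1.
Proof.
by move=> f Xf; split; [exists f|rewrite mul1r; apply: Theta_norm_le].
Qed.

Lemma A3_frame_lower_bound A : A3_with X N g A ->
  forall f, X f -> A * N f <= nr (coef_seq g f).
Proof.
by move=> HA f Xf; apply: Theta_norm_ge => [|h]; [exists f|apply: HA].
Qed.

Lemma frame_Theta_A3 : frame X N g Th nr <-> A3 X N g.
Proof.
split=> [[A [B [A0 [_ HA]]]]|[A [A0 [_ HA]]]]; last first.
  exists A, 1; split=> //; split; first exact: bessel_Theta.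
  exact: A3_frame_lower_bound.
exists (Num.min A 1); split; first by rewrite lt_min A0 ltr01.
split=> [|f Xf h Mh]; first by rewrite ge_min lexx orbT.
apply: le_trans (Theta_norm_le Mh); apply: le_trans (HA f Xf).
by rewrite ler_wpM2r ?(norm_on_ge0 nX Xf) // ge_min lexx.
Qed.

Lemma tight_frame_Theta : A3_with X N g 1 -> tight_frame X N g Th nr.
Proof.
move=> HA; exists 1; split=> //; split; first exact: bessel_Theta.
exact: A3_frame_lower_bound.
Qed.

Hypothesis gdual : forall i, dual_on X N (g i).

Lemma MsetZ a c f : M c f -> M (a *: c) (a *: f).
Proof.
move=> [Xf cf]; split=> [|i]; first exact: (subspace_onZ sX a Xf).
rewrite (linear_onZ sX (gdual i).1 _ Xf) !normrM.
exact: (ler_wpM2l (normr_ge0 a) (cf i)).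
Qed.

Lemma Mset0 : M 0 0.
Proof. by split=> [|i]; [exact: subspace_on0|rewrite normr0]. Qed.

Lemma Theta0 : Th 0.
Proof. by exists 0; apply: Mset0. Qed.

Lemma Theta_norm0 : nr 0 = 0.
Proof.
apply/eqP; rewrite eq_le (Theta_norm_ge0 Theta0) andbT.
by rewrite -(norm_on0 sX nX); apply: Theta_norm_le Mset0.
Qed.

Lemma ThetaZ a c : Th c -> Th (a *: c).
Proof. by move=> [f Mf]; exists (a *: f); apply: MsetZ. Qed.

Lemma Theta_coord_bound i :
  exists2 K, 0 < K & forall c, Th c -> `|c i| <= K * nr c.
Proof.
have [K K0 gK] := dual_on_bounded sX nX (gdual i).
have K1 : 0 < K + 1 by rewrite ltr_wpDl.
exists (K + 1) => // c Tc; rewrite mulrC -ler_pdivrMr //.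
apply: Theta_norm_ge => // f [Xf cf]; rewrite ler_pdivrMr //.
apply: le_trans (le_trans (cf i) (gK _ Xf)) _.
by have := norm_on_ge0 nX Xf; nra.
Qed.

Lemma Theta_normZ a c : Th c -> nr (a *: c) = `|a| * nr c.
Proof.
have Zle b d : b != 0 -> Th d -> nr (b *: d) <= `|b| * nr d.
  move=> b0 Td; have b_gt0 : 0 < `|b| by rewrite normr_gt0.
  rewrite mulrC -ler_pdivrMr //; apply: Theta_norm_ge => // f Mf.
  rewrite ler_pdivrMr // mulrC -(norm_onZ nX _ Mf.1).
  exact: Theta_norm_le (MsetZ b Mf).
move=> Tc; have [->|a0] := eqVneq a 0.
  by rewrite scale0r normr0 mul0r Theta_norm0.
apply/eqP; rewrite eq_le Zle //=.
have := Zle a^-1 _ (invr_neq0 a0) (ThetaZ a Tc).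
rewrite scalerA mulVf // scale1r normfV.
have a_gt0 : 0 < `|a| by rewrite normr_gt0.
by rewrite -(ler_pM2l a_gt0) mulrA mulfV ?normr_eq0 // mul1r.
Qed.

Lemma Theta_norm_eq0 c : Th c -> nr c = 0 -> c = 0.
Proof.
move=> Tc c0; apply/funext => i; have [K _ cK] := Theta_coord_bound i.
by apply/normr0_eq0/eqP; rewrite eq_le normr_ge0 andbT -(mulr0 K) -c0 cK.
Qed.

Hypothesis A1X : A1 X N g.

Lemma ThetaD c d : Th c -> Th d -> Th (c + d).
Proof.
move=> Tc Td; have [f Mf] := Tc; have [h Mh] := Td.
by have [r Mr _] := A1X Tc Td Mf Mh; exists r.
Qed.

Lemma ThetaB c d : Th c -> Th d -> Th (c - d).
Proof.
by move=> Tc Td; apply: ThetaD => //; rewrite -scaleN1r; apply: ThetaZ.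
Qed.

Lemma Theta_normD c d : Th c -> Th d -> nr (c + d) <= nr c + nr d.
Proof.
move=> Tc Td; apply/ler_addgt0Pr => e e0.
have e2 : 0 < e / 2 by rewrite divr_gt0.
have [f Mf Nf] := Theta_norm_lt Tc (ltr_pwDr e2 (lexx (nr c))).
have [h Mh Nh] := Theta_norm_lt Td (ltr_pwDr e2 (lexx (nr d))).
have [r Mr Nr] := A1X Tc Td Mf Mh; have := Theta_norm_le Mr; lra.
Qed.

Lemma subspace_Theta : subspace_on Th.
Proof.
by split; [exact: Theta0|split=> [c d|a c]; [apply: ThetaD|apply: ThetaZ]].
Qed.

Lemma norm_Theta : norm_on Th nr.
Proof.
split; first exact: Theta_norm_ge0.
split; first exact: Theta_norm_eq0.
by split=> [a c|c d]; [apply: Theta_normZ|apply: Theta_normD].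
Qed.

Lemma Theta_coord_continuous i : continuous_on Th nr (fun c => c i).
Proof.
have [K K0 cK] := Theta_coord_bound i.
by apply: (bounded_continuous_on subspace_Theta _ (ltW K0) cK) => a c d _ _.
Qed.

Hypothesis RX : reflexive_on X N.

Lemma Theta_ultra_limit (U : set_system nat) (u : nat -> nat -> R)
    (c : nat -> R) (e : R) (n0 m : nat) :
  UltraFilter U -> (\forall n \near U, (n0 <= n)%N) ->
  (forall n, Th (u n)) -> (forall i, (fun n => u n i) @ U --> c i) ->
  (forall m n, (n0 <= m)%N -> (n0 <= n)%N -> nr (u m - u n) < e) ->
  (n0 <= m)%N -> Th (u m - c) /\ nr (u m - c) <= e.
Proof.
move=> UU Un0 Tu uc ue m0.
(* [maxn n n0] makes the choice meaningful for every [n]. *)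
have /choice [r rP] : forall n, exists f, M (u m - u (maxn n n0)) f /\ N f < e.
  move=> n; have n0n := leq_maxr n n0.
  by have [f] := Theta_norm_lt (ThetaB (Tu m) (Tu _)) (ue _ _ m0 n0n); exists f.
have [f [Xf Nf] rf] := reflexive_weak_limit BX RX UU (fun n => (rP n).1.1)
  (fun n => ltW (rP n).2).
have Mf : M (u m - c) f.
  split=> // i; have umc : (fun n => `|u m i - u n i|) @ U --> `|(u m - c) i|.
    exact: cvg_norm (cvgB (cvg_cst (u m i)) (uc i)).
  apply: (ler_cvg_to umc (cvg_norm (rf _ (gdual i)))).
  apply: filterS Un0 => n /maxn_idPl n0n; have [[_ +] _] := rP n.
  by rewrite n0n; apply.
by split; [exists f|apply: le_trans (Theta_norm_le Mf) Nf].
Qed.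

Lemma complete_Theta : complete_on Th nr.
Proof.
move=> u Tu Cu.
have [U [UU evU]] := @ultraFilterLemma nat \oo _.
have Uge n0 : \forall n \near U, (n0 <= n)%N by apply: evU; exists n0.
have ucvg i : cvg ((fun n => u n i) @ U).
  have [n0 Cn0] := Cu 1 ltr01; have [K K0 cK] := Theta_coord_bound i.
  apply: (@ultra_bounded_cvg _ _ _ _ _ (K + `|u n0 i|)).
  apply: filterS (Uge n0) => n n0n.
  rewrite -[u n i](subrK (u n0 i)); apply: le_trans (ler_normD _ _) _.
  rewrite lerD2r; apply: le_trans (cK _ (ThetaB (Tu n) (Tu n0))) _.
  by rewrite -[leRHS]mulr1 ler_wpM2l // ltW // Cn0.
pose c i := lim ((fun n => u n i) @ U).
have close e : 0 < e -> exists n0, forall m, (n0 <= m)%N ->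
    Th (u m - c) /\ nr (u m - c) <= e.
  move=> e0; have [n0 Cn0] := Cu e e0; exists n0 => m m0.
  exact: Theta_ultra_limit (Uge n0) Tu ucvg Cn0 m0.
exists c; split.
  have [n0 /(_ n0 (leqnn n0)) [Tc _]] := close 1 ltr01.
  have -> : c = u n0 - (u n0 - c) by rewrite opprB addrC subrK.
  exact: (ThetaB (Tu n0) Tc).
move=> e e0; have [|n0 Hn0] := close (e / 2); first by rewrite divr_gt0.
exists n0 => n n0n; have [_ cn] := Hn0 n n0n; lra.
Qed.

Lemma BK_Theta : BK_space Th nr.
Proof.
split; last exact: Theta_coord_continuous.
split; first exact: subspace_Theta.
by split; [exact: norm_Theta|exact: complete_Theta].
Qed.

Hypothesis g_neq0 : forall i, exists2 x, X x & g i x <> 0.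

Definition partial_sum (a : nat -> R) (n : nat) : nat -> R :=
  \sum_(j < n) a j *: unit_vec R j.

Lemma partial_sumE a n i : partial_sum a n i = if (i < n)%N then a i else 0.
Proof.
elim: n => [|n IH]; first by rewrite /partial_sum big_ord0.
rewrite /partial_sum big_ord_recr /=.
change (partial_sum a n i + a n * unit_vec R n i =
  if (i < n.+1)%N then a i else 0).
rewrite IH /unit_vec; have [->|i_neq] := eqVneq i n.
  by rewrite ltnn ltnSn mulr1 add0r.
by rewrite mulr0 addr0 ltnS (leq_eqVlt i n) (negbTE i_neq).
Qed.

Lemma sub_partial_sum c n : c - partial_sum c n = tail_seq c n.
Proof.
apply/funext => i; rewrite /tail_seq -[(c - _) i]/(c i - partial_sum c n i).
by rewrite partial_sumE; case: ifP; rewrite ?subrr ?subr0.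
Qed.

Lemma Theta_unit_vec j : Th (unit_vec R j).
Proof.
have [x Xx gx] := g_neq0 j; exists ((g j x)^-1 *: x).
split=> [|i]; first exact: (subspace_onZ sX _ Xx).
rewrite /unit_vec; case: eqP => [->|_]; last by rewrite normr0.
by rewrite (linear_onZ sX (gdual j).1 _ Xx) mulVf ?normr1 //; apply/eqP.
Qed.

Lemma Theta_partial_sum a n : Th (partial_sum a n).
Proof.
elim: n => [|n IH]; first by rewrite /partial_sum big_ord0; exact: Theta0.
rewrite /partial_sum big_ord_recr /=; apply: ThetaD => //.
by apply: ThetaZ; apply: Theta_unit_vec.
Qed.

Lemma Theta_tail c n : Th c -> Th (tail_seq c n).
Proof.
move=> Tc; rewrite -sub_partial_sum.
by apply: ThetaB => //; apply: Theta_partial_sum.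
Qed.

Lemma Theta_norm_tail_le c k n : Th c -> (k <= n)%N ->
  nr (tail_seq c n) <= nr (tail_seq c k).
Proof.
move=> Tc kn; have [] // := solid_Theta (Theta_tail k Tc) (d := tail_seq c n).
move=> i; rewrite /tail_seq; case: ifP => [_|/negbT]; first by rewrite normr0.
by rewrite -leqNgt => ni; rewrite ifF // ltnNge (leq_trans kn ni).
Qed.

Lemma partial_sum_coef c a : Th c ->
  nr (c - partial_sum a n) @[n --> \oo] --> (0 : R^o) -> a = c.
Proof.
move=> Tc cv; apply/funext => i; have [K _ cK] := Theta_coord_bound i.
apply/eqP; rewrite -subr_eq0 -normr_le0.
have Kcv : K * nr (c - partial_sum a n) @[n --> \oo] --> (0 : R).
  by rewrite -(mulr0 K); apply: cvgM cv; apply: cvg_cst.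
apply: (ler_cvg_to (cvg_cst _) Kcv); apply: filterS (nbhs_infty_gt i) => n ni.
have := cK _ (ThetaB Tc (Theta_partial_sum a n)).
by rewrite -[(c - _) i]/(c i - partial_sum a n i) partial_sumE ni distrC.
Qed.

Lemma CB_Theta_A2 : CB_space Th nr <-> A2 X N g.
Proof.
split=> [[_ [_ basis]] c Tc e e0|HA2].
  have [a [cv _]] := basis c Tc; have ac := partial_sum_coef Tc cv.
  rewrite ac in cv.
  have /cvgrPdist_lt/(_ _ e0) close := cv.
  have [n [/= + n_gt0]] := filter_ex (filterI close (nbhs_infty_gt 0)).
  rewrite sub0r normrN sub_partial_sum ger0_norm; last first.
    exact: Theta_norm_ge0 (Theta_tail n Tc).
  by move=> /(Theta_norm_lt (Theta_tail n Tc)) ?; exists n.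
split; first exact: BK_Theta.
split=> [|c Tc]; first exact: Theta_unit_vec.
exists c; split=> [|a cv]; last exact/esym/(partial_sum_coef Tc cv).
apply/cvgrPdist_lt => e e0; have [k [_ [f Mf Nf]]] := HA2 c Tc e e0.
apply: filterS (nbhs_infty_ge k) => n kn /=.
rewrite sub0r normrN sub_partial_sum ger0_norm; last first.
  exact: Theta_norm_ge0 (Theta_tail n Tc).
apply: le_lt_trans (Theta_norm_tail_le Tc kn) _.
exact: le_lt_trans (Theta_norm_le Mf) Nf.
Qed.

End ThetaSpace.

Lemma nested_sub0 (T : Type) (X : nat -> set T) :
  (forall s, X s.+1 `<=` X s) -> forall s, X s `<=` X 0%N.
Proof. by move=> Xdec; elim=> [//|s IH] x /Xdec /IH. Qed.

Lemma nested_norm0_le (R : realType) (V : Type) (X : nat -> set V)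
    (N : nat -> V -> R) :
  (forall s, X s.+1 `<=` X s) -> (forall s x, X s.+1 x -> N s x <= N s.+1 x) ->
  forall s x, X s x -> N 0%N x <= N s x.
Proof.
move=> Xdec Nmon; elim=> [//|s IH] x Xx.
exact: le_trans (IH x (Xdec _ _ Xx)) (Nmon _ _ Xx).
Qed.

Lemma dual_on_restrict (R : realType) (V : lmodType R) (X Y : set V)
    (N N' : V -> R) (h : V -> R) :
  subspace_on Y -> Y `<=` X -> (forall x, Y x -> N x <= N' x) ->
  dual_on X N h -> dual_on Y N' h.
Proof.
move=> sY YX NN' [lin cont]; split=> [a x y Yx Yy|x Yx e e0].
  exact: lin (YX _ Yx) (YX _ Yy).
have [d d0 hd] := cont x (YX _ Yx) e e0; exists d => // y Yy yx.
exact: hd (YX _ Yy) (le_lt_trans (NN' _ (subspace_onB sY Yy Yx)) yx).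
Qed.

Lemma dense_neq0 (R : realType) (V : lmodType R) (D X : set V) (N : V -> R)
    (h : V -> R) x :
  subspace_on X -> norm_on X N -> D `<=` X -> dense_in D X N ->
  continuous_on X N h -> X x -> h x <> 0 -> exists2 y, D y & h y <> 0.
Proof.
move=> sX nX DX dense cont Xx hx.
have hx_gt0 : 0 < `|h x| by rewrite normr_gt0; apply/eqP.
have [d d0 hd] := cont x Xx _ hx_gt0.
have [y Dy xy] := dense x Xx d d0; exists y => // hy.
have := hd y (DX _ Dy).
rewrite (norm_on_distC sX nX (DX _ Dy) Xx) hy sub0r normrN.
by rewrite ltxx => /(_ xy).
Qed.

Lemma Theta_subset (R : realType) (V : Type) (X Y : set V) (g : nat -> V -> R) :
  Y `<=` X -> Theta Y g `<=` Theta X g.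
Proof. by move=> YX c [f [Yf cf]]; exists f; split=> //; apply: YX. Qed.

Lemma Theta_norm_mono (R : realType) (V : lmodType R) (X Y : set V)
    (N N' : V -> R) (g : nat -> V -> R) c :
  banach_on X N -> Y `<=` X -> (forall x, Y x -> N x <= N' x) ->
  Theta Y g c -> Theta_norm X N g c <= Theta_norm Y N' g c.
Proof.
move=> BX YX NN' Tc; apply: Theta_norm_ge => // f [Yf cf].
apply: le_trans (NN' _ Yf); apply: Theta_norm_le => //.
by split=> //; apply: YX.
Qed.

Lemma bigcap_Theta_neq0 (R : realType) (V : Type) (X : nat -> set V)
    (g : nat -> V -> R) i :
  (exists2 y, (\bigcap_(s in [set: nat]) X s) y & g i y <> 0) ->
  \bigcap_(s in [set: nat]) Theta (X s) g <> [set (fun _ => 0 : R)].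
Proof.
move=> [y Fy gy] E.
have : (\bigcap_(s in [set: nat]) Theta (X s) g) (coef_seq g y).
  by move=> s _; exists y; split=> //; apply: Fy.
by rewrite E => /(congr1 (fun c => c i)).
Qed.

Theorem theorem5p1 (R : realType) (V : lmodType R)
  (X : nat -> set V) (N : nat -> V -> R) (g : nat -> V -> R) :
  (forall s, banach_on (X s) (N s)) ->
  (forall s, reflexive_on (X s) (N s)) ->
  (forall s, X s.+1 `<=` X s) ->
  [set (0 : V)] <> \bigcap_(s in [set: nat]) X s ->
  (forall s x, X s.+1 x -> N s x <= N s.+1 x) ->
  (forall s, dense_in (\bigcap_(t in [set: nat]) X t) (X s) (N s)) ->
  (forall i, dual_on (X 0%N) (N 0%N) (g i)) ->
  (forall i, exists2 x, X 0%N x & g i x <> 0) ->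
  (forall s, A1 (X s) (N s) g) ->
  (* (P1) *)
  ((forall s, seq_space (Theta (X s) g) (Theta_norm (X s) (N s) g) /\
              solid (Theta (X s) g) (Theta_norm (X s) (N s) g) /\
              BK_space (Theta (X s) g) (Theta_norm (X s) (N s) g)) /\
   \bigcap_(s in [set: nat]) Theta (X s) g <> [set (fun _ => 0 : R)] /\
   (forall s, Theta (X s.+1) g `<=` Theta (X s) g) /\
   (forall s c, Theta (X s.+1) g c ->
      Theta_norm (X s) (N s) g c <= Theta_norm (X s.+1) (N s.+1) g c) /\
   (forall s, bessel_with (X s) (N s) g (Theta (X s) g)
                (Theta_norm (X s) (N s) g) 1)) /\
  (* (P2) *)
  (forall s, (0 < s)%N ->
     (frame (X s) (N s) g (Theta (X s) g) (Theta_norm (X s) (N s) g)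
        <-> A3 (X s) (N s) g) /\
     (A3_with (X s) (N s) g 1 ->
        tight_frame (X s) (N s) g (Theta (X s) g) (Theta_norm (X s) (N s) g))) /\
  (* (P3) *)
  (forall s, (0 < s)%N ->
     (CB_space (Theta (X s) g) (Theta_norm (X s) (N s) g) <-> A2 (X s) (N s) g)).
Proof.
(* [X_F <> {0}] also follows from density and [g_i <> 0]. *)
move=> BX RX Xdec _ Nmon dense gd g_neq0 A1X.
have gdual s i : dual_on (X s) (N s) (g i).
  apply: (dual_on_restrict (BX s).1 (nested_sub0 Xdec (s := s)) _ (gd i)).
  exact: (nested_norm0_le Xdec Nmon).
have gF i : exists2 y, (\bigcap_(t in [set: nat]) X t) y & g i y <> 0.
  have [x Xx gx] := g_neq0 i.
  apply: (dense_neq0 (BX 0%N).1 (BX 0%N).2.1 _ (dense 0%N) (gd i).2 Xx gx).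
  by move=> y /(_ 0%N I).
have g_neq0s s i : exists2 x, X s x & g i x <> 0.
  by have [y Fy gy] := gF i; exists y => //; apply: Fy.
split; [split; [|split; [|split; [|split]]]|split].
- move=> s; have BK := BK_Theta (BX s) (gdual s) (A1X s) (RX s).
  by split; [exact: BK.1|split; [exact: solid_Theta|]].
- exact: (bigcap_Theta_neq0 (gF 0%N)).
- by move=> s; apply: Theta_subset; apply: Xdec.
- by move=> s c; apply: (Theta_norm_mono (BX s) (Xdec s) (Nmon s)).
- by move=> s; apply: bessel_Theta.
- by move=> s _; split; [apply: frame_Theta_A3|apply: tight_frame_Theta].
- move=> s _.
  exact: (CB_Theta_A2 (BX s) (gdual s) (A1X s) (RX s) (g_neq0s s)).
Qed.
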